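(* Let $A$ be a noetherian ring and $M$ a finitely generated $A$-module. For each prime $\mathfrak{p}\subset A$, let an element $s(\mathfrak{p})\in M_{\mathfrak{p}}$ be given, such that whenever $\mathfrak{p}\subset \mathfrak{q}$ are primes we have $s(\mathfrak{p}) = 1\otimes s(\mathfrak{q}) \in A_{\mathfrak{p}}\otimes_{A_{\mathfrak{q}}} M_{\mathfrak{q}} = M_{\mathfrak{p}}$. Then there exists a unique $v\in M$ such that $i_{\mathfrak{p}}(v) = s(\mathfrak{p})$ for each prime $\mathfrak{p}$, where $i_{\mathfrak{p}}: M\to M_{\mathfrak{p}}$, $w\mapsto w/1$, is the localization map. *)

From mathcomp Require Import all_boot all_order all_algebra.
Set Implicit Arguments. Unset Strict Implicit. Unset Printing Implicit Defensive.
Import GRing.Theory.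
Local Open Scope ring_scope.

Section CommAlg.
Variable A : comPzRingType.

Definition is_ideal (I : A -> Prop) : Prop :=
  [/\ I 0, (forall x y, I x -> I y -> I (x + y)) & (forall a x, I x -> I (a * x))].

Definition is_prime (P : A -> Prop) : Prop :=
  [/\ is_ideal P, ~ P 1 & (forall x y, P (x * y) -> P x \/ P y)].

Definition noetherian : Prop :=
  forall I : nat -> (A -> Prop),
    (forall n, is_ideal (I n)) ->
    (forall n x, I n x -> I n.+1 x) ->
    exists N, forall n x, (N <= n)%N -> I n x -> I N x.

Variable M : lmodType A.

Definition fin_gen : Prop :=
  exists n (g : 'I_n -> M), forall m : M,
    exists c : 'I_n -> A, m = \sum_(i < n) c i *: g i.

(* Localization M_P at a prime P: an element of M_P is a fraction m / s,
   represented by a pair (m, s) with s \notin P; two fractions are equal in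
   M_P iff they are related by [loc_eq P]. *)
Definition locfrac := (M * A)%type.

Definition loc_eq (P : A -> Prop) (x y : locfrac) : Prop :=
  exists u, ~ P u /\ u *: (y.2 *: x.1 - x.2 *: y.1) = 0.

Definition loc_map (w : M) : locfrac := (w, 1).

End CommAlg.

From mathcomp Require Import all_boot all_order all_algebra.
From mathcomp Require Import ring.
From Stdlib Require Import Classical ClassicalEpsilon.
Set Implicit Arguments. Unset Strict Implicit. Unset Printing Implicit Defensive.
Local Open Scope ring_scope.
Import GRing.Theory.

(* Call a "denominator" of the family s any a such that a s is the image of one
   global element of M; denominators form an ideal K.  If K were proper it would
   have an associated prime q = (K : x).  Since A is noetherian, the kernel of
   M -> M_q is finitely generated, hence killed by a single c outside q.  Writing
   s(q) = m / t, compatibility shows that c t x is a denominator: directly at the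
   primes r containing q, and at the others after inverting some z in q \ r, using
   that z x is a denominator.  Thus c t lies in q, which is absurd.  Hence 1 is in K,
   which is existence.  Uniqueness: an element vanishing in every M_p has an
   annihilator contained in no associated prime, so the annihilator is A. *)

Section NoetherianIdeals.
Variable A : comPzRingType.
Hypothesis noethA : noetherian A.

Lemma prime_mul_notin (P : A -> Prop) u v :
  is_prime P -> ~ P u -> ~ P v -> ~ P (u * v).
Proof. by case=> _ _ Pmul Pu Pv /Pmul []. Qed.

Lemma ideal_colon (K : A -> Prop) x : is_ideal K -> is_ideal (fun z => K (z * x)).
Proof.
case=> K0 KD KM; split; first by rewrite mul0r.
- by move=> y z Ky Kz; rewrite mulrDl; apply: KD.
- by move=> a y Ky; rewrite -mulrA; apply: KM.
Qed.

Lemma noetherian_maximal (T : Type) (J : T -> A -> Prop) :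
  (forall t, is_ideal (J t)) -> T ->
  exists t, forall t', (forall x, J t x -> J t' x) -> forall x, J t' x -> J t x.
Proof.
move=> Jideal t0; apply: NNPP => nomax.
have grow t : exists t', (forall x, J t x -> J t' x) /\ exists x, J t' x /\ ~ J t x.
  apply: NNPP => nogrow; apply: nomax; exists t => t' sub x J't'x.
  by apply: NNPP => nJtx; apply: nogrow; exists t'; split => //; exists x.
pose next t := proj1_sig (constructive_indefinite_description _ (grow t)).
have next_spec t := proj2_sig (constructive_indefinite_description _ (grow t)).
pose chain n := iter n next t0.
have [N stable] := noethA (fun n => Jideal (chain n)) (fun n => (next_spec (chain n)).1).
have [_ [x [Jx nJx]]] := next_spec (chain N).
exact/nJx/(stable N.+1 x (leqnSn N) Jx).
Qed.

Lemma noetherian_assoc_prime (K : A -> Prop) : is_ideal K -> ~ K 1 ->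
  exists x, ~ K x /\ is_prime (fun z => K (z * x)).
Proof.
move=> Kideal nK1.
have [[x nKx] xmax] := @noetherian_maximal {x | ~ K x} (fun x z => K (z * sval x))
  (fun x => ideal_colon (sval x) Kideal) (exist _ 1 nK1).
exists x; split => //; split; first exact: ideal_colon.
- by rewrite mul1r.
- move=> y z Kyzx; apply: NNPP => /not_or_and [nKyx nKzx]; apply: nKzx.
  have [_ _ Kmul] := Kideal.
  apply: (xmax (exist _ (y * x) nKyx)) => /= [w Kwx|].
  + by rewrite mulrA (mulrC w) -mulrA; apply: Kmul.
  + by rewrite mulrA (mulrC z).
Qed.

End NoetherianIdeals.

Section Span.
Variable A : comPzRingType.

Fixpoint span (V : lmodType A) (g : seq V) (v : V) : Prop :=
  if g is h :: g' then exists a w, span g' w /\ v = a *: h + w else v = 0.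

Definition submod (V : lmodType A) (N : V -> Prop) :=
  [/\ N 0, forall x y, N x -> N y -> N (x + y) & forall a x, N x -> N (a *: x)].

Lemma scalerAC (V : lmodType A) a b (v : V) : a *: (b *: v) = b *: (a *: v).
Proof. by rewrite !scalerA mulrC. Qed.

Lemma span_submod (V : lmodType A) (g : seq V) : submod (span g).
Proof.
elim: g => [|h g [S0 SD SZ]] /=.
  split => // [x y -> ->|a x ->]; [exact: addr0 | exact: scaler0].
split; first by exists 0, 0; rewrite scale0r addr0.
- move=> _ _ [a [x [Sx ->]]] [b [y [Sy ->]]].
  by exists (a + b), (x + y); rewrite scalerDl addrACA; split; first exact: SD.
- move=> c _ [a [x [Sx ->]]].
  by exists (c * a), (c *: x); rewrite scalerDr scalerA; split; first exact: SZ.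
Qed.

Lemma submodB (V : lmodType A) (N : V -> Prop) x y :
  submod N -> N x -> N y -> N (x - y).
Proof. by case=> _ ND NZ Nx Ny; apply: ND => //; rewrite -scaleN1r; apply: NZ. Qed.

Lemma submodI (V : lmodType A) (N N' : V -> Prop) :
  submod N -> submod N' -> submod (fun v => N v /\ N' v).
Proof.
case=> N0 ND NZ [N'0 N'D N'Z]; split => // [x y [] ? ? [] ? ?|a x [] ? ?].
  by split; [apply: ND | apply: N'D].
by split; [apply: NZ | apply: N'Z].
Qed.

Lemma span_cat (V : lmodType A) (g g' : seq V) v v' :
  span g v -> span g' v' -> span (g ++ g') (v + v').
Proof.
elim: g v => [|h g IH] /= v; first by move=> -> ?; rewrite add0r.
by case=> a [w [Sw ->]] Sv'; exists a, (w + v'); rewrite addrA; split; first exact: IH.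
Qed.

Lemma span_sum (V : lmodType A) (I : Type) (r : seq I) (c : I -> A) (g : I -> V) :
  span [seq g i | i <- r] (\sum_(i <- r) c i *: g i).
Proof.
by elim: r => [|i r IH]; rewrite ?big_nil ?big_cons //; exists (c i), (\sum_(j <- r) c j *: g j).
Qed.

Lemma fin_gen_span (V : lmodType A) : fin_gen V -> exists g : seq V, forall v, span g v.
Proof.
case=> n [g gen]; exists [seq g i | i <- index_enum 'I_n] => v.
by have [c ->] := gen v; apply: span_sum.
Qed.

Lemma span_linear_lift (V W : lmodType A) (R : V -> W -> Prop) (g : seq V) :
  R 0 0 -> (forall x y x' y', R x y -> R x' y' -> R (x + x') (y + y')) ->
  (forall a x y, R x y -> R (a *: x) (a *: y)) ->
  (forall x, x \in g -> exists y, R x y) ->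
  exists ys : seq W, (forall y, y \in ys -> exists x, R x y) /\
    forall x, span g x -> exists y, span ys y /\ R x y.
Proof.
move=> R0 RD RZ; elim: g => [|h g IH] liftg.
  by exists [::]; split => // _ ->; exists 0.
have [yh Rh] := liftg h (mem_head h g).
have [ys [ysR lift]] := IH (fun x gx => liftg x (mem_behead (s := h :: g) gx)).
exists (yh :: ys); split.
  by move=> y; rewrite inE => /orP [/eqP -> | /ysR]; [exists h | ].
move=> _ [a [x [Sx ->]]]; have [y [Sy Rxy]] := lift x Sx.
by exists (a *: yh + y); split; [exists a, y | apply/RD/Rxy/RZ].
Qed.

End Span.

Section NoetherianModules.
Variable A : comPzRingType.
Hypothesis noethA : noetherian A.

Lemma noetherian_ideal_fg (I : A -> Prop) : is_ideal I ->
  exists L : seq A^o, (forall b, b \in L -> I b) /\ forall a, I a -> span L a.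
Proof.
move=> Iideal.
have nilI : forall b : A^o, b \in [::] -> I b by [].
have [[L LI] Lmax] := @noetherian_maximal A noethA {L : seq A^o | forall b, b \in L -> I b}
  (fun L => span (sval L)) (fun L => span_submod (sval L)) (exist _ [::] nilI).
exists L; split => // a Ia.
have aLI : forall b, b \in a :: L -> I b.
  by move=> b; rewrite inE => /orP [/eqP -> | /LI].
have [S0 _ _] := span_submod L.
apply: (Lmax (exist _ (a :: L) aLI)) => /= [x Sx|].
  by exists 0, x; rewrite scale0r add0r.
by exists 1, 0; rewrite scale1r addr0.
Qed.

Lemma noetherian_submod_fg (M : lmodType A) (g : seq M) (N : M -> Prop) :
  submod N -> (forall v, N v -> span g v) ->
  exists t, (forall v, v \in t -> N v) /\ forall v, N v -> span t v.
Proof.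
elim: g N => [|h g IH] N Nsub Ng.
  by exists [::]; split => // v /Ng.
have [t' [t'N Nt']] := IH _ (submodI Nsub (span_submod g)) (fun v Nv => Nv.2).
have [N0 ND NZ] := Nsub; have [S0 SD SZ] := span_submod g.
pose R (a : A^o) v := N v /\ span g (v - a *: h).
have R0 : R 0 0 by split; rewrite // scale0r subr0.
have RD a v a' v' : R a v -> R a' v' -> R (a + a') (v + v').
  case=> Nv Sv [Nv' Sv']; split; first exact: ND.
  by rewrite scalerDl opprD addrACA; apply: SD.
have RZ c a v : R a v -> R (c *: a) (c *: v).
  case=> Nv Sv; split; first exact: NZ.
  by rewrite -scalerA -scalerBr; apply: SZ.
have Iideal : is_ideal (fun a => exists v, R a v).
  split; first by exists 0.
  - by move=> a a' [v Rv] [v' Rv']; exists (v + v'); apply: RD.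
  - by move=> c a [v Rv]; exists (c *: v); apply: RZ.
have [L [LI IL]] := noetherian_ideal_fg Iideal.
have [ys [ysR lift]] := span_linear_lift R0 RD RZ LI.
exists (ys ++ t'); split.
  by move=> v; rewrite mem_cat => /orP [/ysR [a []] | /t'N []].
move=> v Nv; have [a [w [Sw Ev]]] := Ng v Nv.
have Ia : exists v, R a v by exists v; split; rewrite // Ev (addrC (a *: h)) addrK.
have [y [Sy [Ny Syh]]] := lift a (IL a Ia).
have -> : v = y + (v - y) by rewrite addrC subrK.
apply: span_cat => //; apply: Nt'; split; first exact: submodB.
have -> : v - y = w - (y - a *: h) by rewrite Ev opprB addrA (addrC w).
exact: submodB.
Qed.

End NoetherianModules.

Section Localization.
Variables (A : comPzRingType) (M : lmodType A).

Definition loc_null (P : A -> Prop) (m : M) := exists u, ~ P u /\ u *: m = 0.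

Variable P : A -> Prop.
Hypothesis Pprime : is_prime P.

Lemma loc_null_submod : submod (loc_null P).
Proof.
have [_ P1 _] := Pprime; split.
- by exists 1; rewrite scaler0.
- move=> x y [u [Pu ux]] [u' [Pu' u'y]]; exists (u * u').
  split; first exact: prime_mul_notin.
  by rewrite scalerDr {1}mulrC -!scalerA ux u'y !scaler0 addr0.
- by move=> a x [u [Pu ux]]; exists u; rewrite scalerA mulrC -scalerA ux scaler0.
Qed.

Lemma loc_nullZK c m : ~ P c -> loc_null P (c *: m) -> loc_null P m.
Proof.
move=> Pc [u [Pu ucm]]; exists (u * c).
by rewrite -scalerA; split; first exact: prime_mul_notin.
Qed.

Lemma loc_eqE (x y : locfrac M) :
  loc_eq P x y = loc_null P (y.2 *: x.1 - x.2 *: y.1).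
Proof. by []. Qed.

Lemma loc_eq_sym (x y : locfrac M) : loc_eq P x y -> loc_eq P y x.
Proof. by case=> u [Pu uxy]; exists u; rewrite -opprB scalerN uxy oppr0. Qed.

Lemma loc_eq_trans (x y z : locfrac M) :
  ~ P y.2 -> loc_eq P x y -> loc_eq P y z -> loc_eq P x z.
Proof.
move=> Py xy yz; apply: (loc_nullZK Py).
have [_ ND NZ] := loc_null_submod.
have -> : y.2 *: (z.2 *: x.1 - x.2 *: z.1) =
    z.2 *: (y.2 *: x.1 - x.2 *: y.1) + x.2 *: (z.2 *: y.1 - y.2 *: z.1).
  rewrite !scalerBr !scalerA addrA (mulrC z.2 x.2) subrK.
  by rewrite (mulrC y.2) (mulrC x.2 y.2).
by apply: ND; apply: NZ.
Qed.

Lemma loc_eqD (m m' n n' : M) a b :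
  loc_eq P (m, a) (n, b) -> loc_eq P (m', a) (n', b) -> loc_eq P (m + m', a) (n + n', b).
Proof.
rewrite !loc_eqE /= !scalerDr opprD addrACA.
by have [_ ND _] := loc_null_submod; apply: ND.
Qed.

Lemma loc_eqZ c (m n : M) a b :
  loc_eq P (m, a) (n, b) -> loc_eq P (c *: m, a) (c *: n, b).
Proof.
rewrite !loc_eqE /= !scalerA (mulrC b) (mulrC a) -!scalerA -scalerBr.
by have [_ _ NZ] := loc_null_submod; apply: NZ.
Qed.

Lemma loc_eqZK c (m n : M) a b :
  ~ P c -> loc_eq P (c *: m, a) (c *: n, b) -> loc_eq P (m, a) (n, b).
Proof.
rewrite !loc_eqE /= !scalerA (mulrC b) (mulrC a) -!scalerA -scalerBr.
exact: loc_nullZK.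
Qed.

End Localization.

Section NoetherianLocalization.
Variables (A : comPzRingType) (M : lmodType A).
Hypothesis noethA : noetherian A.

Lemma loc_null_span (P : A -> Prop) (t : seq M) : is_prime P ->
  (forall m, m \in t -> loc_null P m) ->
  exists c, ~ P c /\ forall m, span t m -> c *: m = 0.
Proof.
move=> Pprime; elim: t => [|h t IH] tN.
  by have [_ P1 _] := Pprime; exists 1; split => // _ ->; rewrite scaler0.
have [u [Pu uh]] := tN h (mem_head h t).
have [c [Pc ct]] := IH (fun m mt => tN m (mem_behead (s := h :: t) mt)).
exists (u * c); split; first exact: prime_mul_notin.
move=> _ [a [m [Sm ->]]].
by rewrite scalerDr -!scalerA (ct m Sm) scaler0 addr0 scalerAC (scalerAC u) uh !scaler0.
Qed.

Lemma loc_null_uniform (P : A -> Prop) : fin_gen M -> is_prime P ->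
  exists c, ~ P c /\ forall m : M, loc_null P m -> c *: m = 0.
Proof.
move=> fgM Pprime; have [g gen] := fin_gen_span fgM.
have [t [tN Nt]] := noetherian_submod_fg noethA (loc_null_submod M Pprime) (fun m _ => gen m).
have [c [Pc ct]] := loc_null_span Pprime tN.
by exists c; split => // m /Nt /ct.
Qed.

Lemma loc_null_eq0 (m : M) : (forall P, is_prime P -> loc_null P m) -> m = 0.
Proof.
move=> mnull; pose ann a := a *: m = 0.
have ann_ideal : is_ideal ann.
  split; rewrite /ann ?scale0r //.
  - by move=> a b am bm; rewrite scalerDl am bm addr0.
  - by move=> a b bm; rewrite -scalerA bm scaler0.
suff : ann 1 by rewrite /ann scale1r.
apply: NNPP => nann1.
have [x [_ qprime]] := noetherian_assoc_prime noethA ann_ideal nann1.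
have [u [qu um]] := mnull _ qprime.
by apply: qu; rewrite /ann mulrC -scalerA um scaler0.
Qed.

End NoetherianLocalization.

Section Gluing.
Variables (A : comPzRingType) (M : lmodType A).
Hypotheses (noethA : noetherian A) (fgM : fin_gen M).
Variable s : (A -> Prop) -> locfrac M.
Hypothesis s_den : forall P, is_prime P -> ~ P (s P).2.
Hypothesis s_compat : forall P Q : A -> Prop, is_prime P -> is_prime Q ->
  (forall x, P x -> Q x) -> loc_eq P (s P) (s Q).

Definition denom (a : A) := exists m : M,
  forall P, is_prime P -> loc_eq P (loc_map m) (a *: (s P).1, (s P).2).

Lemma denom_ideal : is_ideal denom.
Proof.
split.
- exists 0 => P Pprime; rewrite loc_eqE /= scale0r !scaler0 subr0.
  by have [N0 _ _] := loc_null_submod M Pprime.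
- move=> a b [m am] [n bn]; exists (m + n) => P Pprime.
  by rewrite scalerDl; apply: loc_eqD; [| apply: am | apply: bn].
- move=> c a [m am]; exists (c *: m) => P Pprime.
  by rewrite -scalerA; apply: loc_eqZ; [| apply: am].
Qed.

Lemma denom_colon_not_prime x : ~ is_prime (fun z => denom (z * x)).
Proof.
set q := fun z => _; move=> qprime.
have [c [qc cnull]] := loc_null_uniform noethA fgM qprime.
suff : q (c * (s q).2) by exact: prime_mul_notin qprime qc (s_den qprime).
exists ((c * x) *: (s q).1) => r rprime.
case: (classic (forall z, q z -> r z)) => [qr | nqr].
- exists 1; have [_ r1 _] := rprime; split => //=.
  rewrite !scale1r -(scaler0 _ x) -(cnull _ (s_compat qprime rprime qr)) /=.
  by rewrite !scalerBr !scalerA; congr (_ *: _ - _ *: _); ring.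
- have [z qz_rz] := not_all_ex_not _ _ nqr.
  have [qz rz] := imply_to_and _ _ qz_rz.
  have [m mz] := qz.
  have E : (c * (s q).2) *: m = z *: ((c * x) *: (s q).1).
    move: (cnull _ (mz q qprime)) => /eqP; rewrite /= scale1r scalerBr subr_eq0.
    by rewrite !scalerA => /eqP ->; congr (_ *: _); ring.
  rewrite /loc_map; apply: (loc_eqZK rprime rz); rewrite -E.
  have -> : z *: ((c * (s q).2 * x) *: (s r).1) = (c * (s q).2) *: ((z * x) *: (s r).1).
    by rewrite !scalerA; congr (_ *: _); ring.
  exact: loc_eqZ (mz r rprime).
Qed.

Lemma denom1 : denom 1.
Proof.
apply: NNPP => nden1.
have [x [_ xprime]] := noetherian_assoc_prime noethA denom_ideal nden1.
exact: denom_colon_not_prime xprime.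
Qed.

End Gluing.

Theorem lemma7 (A : comPzRingType) (M : lmodType A)
  (HA : noetherian A) (HM : fin_gen M)
  (s : (A -> Prop) -> locfrac M)
  (Hs : forall P, is_prime P -> ~ P (s P).2)
  (Hcompat : forall P Q : A -> Prop, is_prime P -> is_prime Q ->
      (forall x, P x -> Q x) -> loc_eq P (s P) (s Q)) :
  exists v : M,
    (forall P, is_prime P -> loc_eq P (loc_map v) (s P)) /\
    (forall w : M, (forall P, is_prime P -> loc_eq P (loc_map w) (s P)) -> w = v).
Proof.
have [v vglue] := denom1 HA HM Hs Hcompat.
have vs P : is_prime P -> loc_eq P (loc_map v) (s P).
  by move=> Pprime; move: (vglue P Pprime); rewrite scale1r -surjective_pairing.
exists v; split => // w ws; apply/eqP; rewrite -subr_eq0; apply/eqP.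
apply: (loc_null_eq0 HA) => P Pprime.
have := loc_eq_trans Pprime (Hs P Pprime) (ws P Pprime) (loc_eq_sym (vs P Pprime)).
by rewrite loc_eqE /= !scale1r.
Qed.
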